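(* Let $X\subset\mathbb{R}^n$ be a finite set of points and let $G\subset\mathbb{R}[x_1,\ldots,x_n]$ be a set of polynomials with $\mathcal I(X)=\langle G\rangle$. Let $t$ be a positive integer and suppose that every $\widetilde g\in\mathcal I(X)$ of degree at most $t$ satisfies $\widetilde g\in\langle G^t\rangle$. Then for any $g\in\mathcal I(X)$ of degree at most $t+1$, if $(\partial g/\partial x_k)(X)=\boldsymbol 0$ for all $k\in\{1,\ldots,n\}$, then $g\in\langle G^t\rangle$.
   Context: $\mathcal I(X)=\{g\in\mathbb{R}[x_1,\ldots,x_n]:g(\boldsymbol x)=0\ \forall\boldsymbol x\in X\}$; for a polynomial $h$, $h(X)$ is the vector of its values at the points of $X$. $\langle S\rangle$ is the ideal generated by $S$; $G^t$ is the set of elements of $G$ of degree at most $t$. *)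

From HB Require Import structures.
From mathcomp Require Import all_boot all_order all_algebra.
From mathcomp Require Import reals.
From mathcomp Require Import mpoly.
Set Implicit Arguments. Unset Strict Implicit. Unset Printing Implicit Defensive.
Import Order.TTheory GRing.Theory Num.Theory.
Local Open Scope ring_scope.

Section Defs.
Variables (R : realType) (n : nat).

Definition evalpt (p : {mpoly R[n]}) (x : 'rV[R]_n) : R := p.@[fun i => x ord0 i].

Definition vanishing_ideal (X : seq 'rV[R]_n) (p : {mpoly R[n]}) : Prop :=
  forall x, x \in X -> evalpt p x = 0.

Definition in_ideal (S : {mpoly R[n]} -> Prop) (p : {mpoly R[n]}) : Prop :=
  exists s : seq ({mpoly R[n]} * {mpoly R[n]}),
    (forall hg, hg \in s -> S hg.2) /\
    p = \sum_(hg <- s) hg.1 * hg.2.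

(* total degree at most t (msize p = 1 + total degree, 0 for p = 0) *)
Definition deg_le (p : {mpoly R[n]}) (t : nat) : Prop := (msize p <= t.+1)%N.

Definition trunc_deg (G : {mpoly R[n]} -> Prop) (t : nat) : {mpoly R[n]} -> Prop :=
  fun g => G g /\ deg_le g t.

End Defs.

From HB Require Import structures.
From mathcomp Require Import all_boot all_order all_algebra.
From mathcomp Require Import reals.
From mathcomp Require Import mpoly.
Set Implicit Arguments. Unset Strict Implicit. Unset Printing Implicit Defensive.
Import Order.TTheory GRing.Theory Num.Theory.
Local Open Scope ring_scope.

(* By Euler's identity [\sum_k x_k dg/dx_k = \sum_m deg(m) g_m x^m], the
   polynomial [(t+1) g - \sum_k x_k dg/dx_k] loses the degree-[t+1] part of [g],
   so it has degree at most [t]; it vanishes on [X] because [g] and all its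
   partial derivatives do.  Hence it lies in [<G^t>], as do the partial
   derivatives (degree at most [t], vanishing on [X]).  Solving for [g], which
   needs [t+1 <> 0], puts [g] in [<G^t>]. *)

Section IdealMembership.
Variables (R : realType) (n : nat) (S : {mpoly R[n]} -> Prop).
Implicit Types (p q : {mpoly R[n]}).

Lemma in_ideal0 : in_ideal S 0.
Proof. by exists [::]; split; [move=> hg; rewrite in_nil | rewrite big_nil]. Qed.

Lemma in_idealD p q : in_ideal S p -> in_ideal S q -> in_ideal S (p + q).
Proof.
move=> [s [Ss ->]] [s' [Ss' ->]]; exists (s ++ s'); split; last by rewrite big_cat.
by move=> hg; rewrite mem_cat => /orP [/Ss|/Ss'].
Qed.

Lemma in_idealMl h p : in_ideal S p -> in_ideal S (h * p).
Proof.
move=> [s [Ss ->]]; exists [seq (h * hg.1, hg.2) | hg <- s]; split.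
  by move=> hg /mapP [x xs ->] /=; apply: Ss.
by rewrite big_map mulr_sumr; apply: eq_bigr => hg _; rewrite mulrA.
Qed.

Lemma in_idealZ c p : in_ideal S p -> in_ideal S (c *: p).
Proof. by rewrite -mul_mpolyC; apply: in_idealMl. Qed.

Lemma in_ideal_sum (I : Type) (r : seq I) (F : I -> {mpoly R[n]}) :
  (forall i, in_ideal S (F i)) -> in_ideal S (\sum_(i <- r) F i).
Proof.
move=> SF; elim: r => [|i r IHr]; first by rewrite big_nil; apply: in_ideal0.
by rewrite big_cons; apply: in_idealD.
Qed.

End IdealMembership.

Section EulerIdentity.
Variables (R : comNzRingType) (n : nat).
Implicit Types (p : {mpoly R[n]}).

Lemma msize_le_mcoeff p k :
  (forall m, (k <= mdeg m)%N -> p@_m = 0) -> (msize p <= k)%N.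
Proof.
move=> p_hi; rewrite msizeE; apply/bigmax_leqP_seq => m /[!mcoeff_msupp] p_m _.
by rewrite ltnNge; apply: contra p_m => /p_hi ->.
Qed.

Lemma msize_mderiv (i : 'I_n) p k :
  (msize p <= k.+1)%N -> (msize (mderiv i p) <= k)%N.
Proof.
move=> size_p; apply: msize_le_mcoeff => m le_km.
rewrite mcoeff_deriv memN_msupp_eq0 ?mul0rn //; apply: msize_mdeg_ge.
by rewrite mdegD mdeg1 addn1 (leq_trans size_p).
Qed.

Lemma mulX_mderivX (i : 'I_n) (m : 'X_{1..n}) :
  'X_i * mderiv i 'X_[m] = (m i)%:R *: 'X_[m] :> {mpoly R[n]}.
Proof.
rewrite mderivX; have [->|m_i] := eqVneq (m i) 0%N; first by rewrite !scale0r mulr0.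
rewrite -scalerAr -mpolyXD addmC submK //.
by apply/mnm_lepP => j; rewrite mnm1E; case: eqP => [<-|] //; rewrite lt0n.
Qed.

Lemma mderiv_euler p :
  \sum_(k < n) 'X_k * mderiv k p = \sum_(m <- msupp p) (mdeg m)%:R *: (p@_m *: 'X_[m]).
Proof.
under eq_bigr => k _ do rewrite {1}[p]mpolyE linear_sum mulr_sumr.
rewrite exchange_big; apply: eq_bigr => m _ /=.
under eq_bigr => k _ do rewrite linearZ -scalerAr mulX_mderivX.
by rewrite -scaler_sumr -scaler_suml -natr_sum -mdegE !scalerA mulrC.
Qed.

Definition euler_defect (d : nat) p : {mpoly R[n]} :=
  d%:R *: p - \sum_(k < n) 'X_k * mderiv k p.

Lemma euler_defectE d p :
  euler_defect d p = \sum_(m <- msupp p) (d%:R - (mdeg m)%:R) *: (p@_m *: 'X_[m]).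
Proof.
rewrite /euler_defect mderiv_euler {1}[p]mpolyE scaler_sumr -sumrB.
by apply: eq_bigr => m _; rewrite scalerBl.
Qed.

Lemma msize_euler_defect d p :
  (msize p <= d.+1)%N -> (msize (euler_defect d p) <= d)%N.
Proof.
move=> size_p; rewrite euler_defectE; apply: leq_trans (msize_sum _ _ _) _.
apply/bigmax_leqP_seq => m p_m _.
have := leq_trans (msize_mdeg_lt p_m) size_p.
rewrite ltnS leq_eqVlt => /orP [/eqP ->|lt_md]; first by rewrite subrr scale0r msize0.
by do 2!apply: leq_trans (msizeZ_le _ _) _; rewrite msizeX.
Qed.

Lemma meval_euler_defect_eq0 (v : 'I_n -> R) d p :
  p.@[v] = 0 -> (forall k, (mderiv k p).@[v] = 0) -> (euler_defect d p).@[v] = 0.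
Proof.
move=> p_v dp_v; rewrite /euler_defect mevalB mevalZ p_v mulr0 rmorph_sum.
by rewrite big1 ?subrr // => k _; rewrite rmorphM /= dp_v mulr0.
Qed.

End EulerIdentity.

Lemma vanishing_ideal_euler_defect (R : realType) (n : nat) (X : seq 'rV[R]_n)
    (d : nat) (p : {mpoly R[n]}) :
  vanishing_ideal X p ->
  (forall k x, x \in X -> evalpt (mderiv k p) x = 0) ->
  vanishing_ideal X (euler_defect d p).
Proof.
by move=> Xp Xdp x xX; apply: meval_euler_defect_eq0 => [|k]; [apply: Xp | apply: Xdp].
Qed.

Theorem lemma2 (R : realType) (n : nat) (X : seq 'rV[R]_n)
    (G : {mpoly R[n]} -> Prop) (t : nat) :
  (forall p, vanishing_ideal X p <-> in_ideal G p) ->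
  (0 < t)%N ->
  (forall gt, vanishing_ideal X gt -> deg_le gt t -> in_ideal (trunc_deg G t) gt) ->
  forall g : {mpoly R[n]},
    vanishing_ideal X g -> deg_le g t.+1 ->
    (forall k : 'I_n, forall x, x \in X -> evalpt (mderiv k g) x = 0) ->
    in_ideal (trunc_deg G t) g.
Proof.
move=> _ _ low_in_Gt g Xg deg_g Xdg.
have Gt_dg k : in_ideal (trunc_deg G t) (mderiv k g).
  by apply: low_in_Gt; [exact: Xdg | exact: msize_mderiv].
have Gt_defect : in_ideal (trunc_deg G t) (euler_defect t.+1 g).
  apply: low_in_Gt; first exact: vanishing_ideal_euler_defect.
  exact: msize_euler_defect.
have -> : g = (t.+1)%:R^-1 *: (euler_defect t.+1 g + \sum_(k < n) 'X_k * mderiv k g).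
  by rewrite subrK scalerA mulVf ?scale1r ?pnatr_eq0.
apply/in_idealZ/in_idealD => //.
by apply: in_ideal_sum => k; apply: in_idealMl.
Qed.
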